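(* Let $M=((W,\preccurlyeq,S),V)$ be an $\mathrm{ITL}^{\mathrm{BD}_n}$ model and $w\in W$ with $M,w\models\{\Box(\neg p\vee\neg\neg p)\mid p\in\mathbb{P}\}$. Then there exist an $\mathrm{ITL}^{\mathrm{BD}_n}$ model $M'=((W',\preccurlyeq',S'),V')$, a world $w'\in W'$ and an intuitionistic temporal bisimulation $Z\subseteq W\times W'$ such that for all $i\ge0$, $S^i(w)\,Z\,S'^i(w')$ and the subframe generated by $S'^i(w')$ has a unique $\preccurlyeq'$-maximal world $u_i$.
   Context: Fix a countable set $\mathbb{P}$ of atoms. Temporal formulas: $\varphi ::= p\mid\bot\mid\varphi\wedge\varphi\mid\varphi\vee\varphi\mid\varphi\to\varphi\mid\circ\varphi\mid\varphi\,\mathsf{U}\,\varphi\mid\varphi\,\mathsf{R}\,\varphi$; $\neg\varphi:=\varphi\to\bot$, $\Box\varphi:=\bot\,\mathsf{R}\,\varphi$. An intuitionistic temporal frame is $(W,\preccurlyeq,S)$ with $W\ne\emptyset$, $\preccurlyeq$ a partial order, $S:W\to W$ forward confluent ($w\preccurlyeq v\Rightarrow S(w)\preccurlyeq S(v)$); persistent if also backward confluent (if $S(w)=v\preccurlyeq u$ then some $t\succcurlyeq w$ has $S(t)=u$). A model adds $V:W\to2^{\mathbb{P}}$ monotone along $\preccurlyeq$. Satisfaction: atoms via $V$; $\bot$ never; $\wedge,\vee$ pointwise; $M,w\models\varphi\to\psi$ iff for all $v\succcurlyeq w$, $M,v\models\varphi$ implies $M,v\models\psi$; $\circ\varphi$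 at $w$ iff $\varphi$ at $S(w)$; $\varphi\,\mathsf{U}\,\psi$: some $k\ge0$ with $\psi$ at $S^k(w)$ and $\varphi$ at $S^i(w)$ for all $0\le i<k$; $\varphi\,\mathsf{R}\,\psi$: for all $k\ge0$, $\psi$ at $S^k(w)$ or $\varphi$ at some $S^i(w)$, $0\le i<k$. An $\mathrm{ITL}^{\mathrm{BD}_n}$ model is a model on a persistent frame with no chain of $n+1$ pairwise distinct $\preccurlyeq$-related worlds. A world is maximal if no distinct world lies $\preccurlyeq$-above it; the subframe generated by $x$ is $\{y\mid x\preccurlyeq y\}$. An intuitionistic temporal bisimulation between $M_1=((W_1,\preccurlyeq_1,S_1),V_1)$ and $M_2=((W_2,\preccurlyeq_2,S_2),V_2)$ is $Z\subseteq W_1\times W_2$ such that whenever $w_1Zw_2$: (C1) $V_1(w_1)=V_2(w_2)$; (C2) for every $v_1\succcurlyeq w_1$ there is $v_2\succcurlyeq w_2$ with $v_1Zv_2$; (C3) for every $v_2\succcurlyeq w_2$ there is $v_1\succcurlyeq w_1$ with $v_1Zv_2$; (C5) $S_1(w_1)\,Z\,S_2(w_2)$; (C6) for all $k_1\ge0$ there are $k_2\ge0$ and $v_1Zv_2$ with $v_2\preccurlyeq S_2^{k_2}(w_2)$, $S_1^{k_1}(w_1)\preccurlyeq v_1$, and for all $0\le j_2<k_2$ there are $0\le j_1<k_1$ and $u_1Zu_2$ with $S_1^{j_1}(w_1)\preccurlyeq u_1$, $u_2\preccurlyeq S_2^{j_2}(w_2)$; (C7) for all $k_2\ge0$ there are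 $k_1\ge0$ and $v_1Zv_2$ with $v_1\preccurlyeq S_1^{k_1}(w_1)$, $S_2^{k_2}(w_2)\preccurlyeq v_2$, and for all $0\le j_1<k_1$ there are $0\le j_2<k_2$ and $u_1Zu_2$ with $S_2^{j_2}(w_2)\preccurlyeq u_2$, $u_1\preccurlyeq S_1^{j_1}(w_1)$; (C8) for all $k_2\ge0$ there are $k_1\ge0$ and $v_1Zv_2$ with $v_2\preccurlyeq S_2^{k_2}(w_2)$, $S_1^{k_1}(w_1)\preccurlyeq v_1$, and for all $0\le j_1<k_1$ there are $0\le j_2<k_2$ and $u_1Zu_2$ with $S_1^{j_1}(w_1)\preccurlyeq u_1$, $u_2\preccurlyeq S_2^{j_2}(w_2)$; (C9) for all $k_1\ge0$ there are $k_2\ge0$ and $v_1Zv_2$ with $v_1\preccurlyeq S_1^{k_1}(w_1)$, $S_2^{k_2}(w_2)\preccurlyeq v_2$, and for all $0\le j_2<k_2$ there are $0\le j_1<k_1$ and $u_1Zu_2$ with $S_2^{j_2}(w_2)\preccurlyeq u_2$, $u_1\preccurlyeq S_1^{j_1}(w_1)$. *)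

From mathcomp Require Import ssreflect ssrfun ssrbool eqtype ssrnat choice.


Inductive form (P : Type) : Type :=
| Atom : P -> form P
| Bot : form P
| And : form P -> form P -> form P
| Or : form P -> form P -> form P
| Imp : form P -> form P -> form P
| Next : form P -> form P
| Until : form P -> form P -> form P
| Release : form P -> form P -> form P.
Arguments Atom {P} _.
Arguments Bot {P}.
Arguments And {P} _ _.
Arguments Or {P} _ _.
Arguments Imp {P} _ _.
Arguments Next {P} _.
Arguments Until {P} _ _.
Arguments Release {P} _ _.

Definition Neg {P : Type} (phi : form P) : form P := Imp phi Bot.
Definition Box {P : Type} (phi : form P) : form P := Release Bot phi.

Record model (P : Type) : Type := Model {
  world : Type;
  le : world -> world -> Prop;
  succ : world -> world;
  val : world -> P -> Prop
}.
Arguments world {P} m.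
Arguments le {P} m _ _.
Arguments succ {P} m _.
Arguments val {P} m _ _.

Definition Sk {P : Type} (M : model P) (k : nat) (w : world M) : world M :=
  iter k (succ M) w.

Definition is_partial_order {P : Type} (M : model P) : Prop :=
  (forall w, le M w w) /\
  (forall u v w, le M u v -> le M v w -> le M u w) /\
  (forall u v, le M u v -> le M v u -> u = v).

Definition forward_confluent {P : Type} (M : model P) : Prop :=
  forall w v, le M w v -> le M (succ M w) (succ M v).

Definition backward_confluent {P : Type} (M : model P) : Prop :=
  forall w u, le M (succ M w) u -> exists t, le M w t /\ succ M t = u.

Definition monotone_val {P : Type} (M : model P) : Prop :=
  forall w v p, le M w v -> val M w p -> val M v p.

Definition bounded_depth {P : Type} (M : model P) (n : nat) : Prop :=
  ~ exists f : nat -> world M,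
      (forall i, i < n -> le M (f i) (f i.+1)) /\
      (forall i j, i <= n -> j <= n -> i <> j -> f i <> f j).

Definition ITL_BD_model {P : Type} (n : nat) (M : model P) : Prop :=
  inhabited (world M) /\ is_partial_order M /\ forward_confluent M /\
  backward_confluent M /\ monotone_val M /\ bounded_depth M n.

Fixpoint sat {P : Type} (M : model P) (w : world M) (phi : form P) : Prop :=
  match phi with
  | Atom p => val M w p
  | Bot => False
  | And a b => sat M w a /\ sat M w b
  | Or a b => sat M w a \/ sat M w b
  | Imp a b => forall v, le M w v -> sat M v a -> sat M v b
  | Next a => sat M (succ M w) a
  | Until a b => exists k, sat M (Sk M k w) b /\
                   (forall i, i < k -> sat M (Sk M i w) a)
  | Release a b => forall k, sat M (Sk M k w) b \/
                   (exists i, i < k /\ sat M (Sk M i w) a)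
  end.

(* Intuitionistic temporal bisimulation (conditions C1-C3, C5-C9). *)
Definition bisimulation {P : Type} (M1 M2 : model P)
    (Z : world M1 -> world M2 -> Prop) : Prop :=
  forall w1 w2, Z w1 w2 ->
  (forall p, val M1 w1 p <-> val M2 w2 p) /\
  (forall v1, le M1 w1 v1 -> exists v2, le M2 w2 v2 /\ Z v1 v2) /\
  (forall v2, le M2 w2 v2 -> exists v1, le M1 w1 v1 /\ Z v1 v2) /\
  Z (succ M1 w1) (succ M2 w2) /\
  (forall k1, exists k2 v1 v2, Z v1 v2 /\
              le M2 v2 (Sk M2 k2 w2) /\ le M1 (Sk M1 k1 w1) v1 /\
              (forall j2, j2 < k2 -> exists j1 u1 u2, j1 < k1 /\ Z u1 u2 /\
                 le M1 (Sk M1 j1 w1) u1 /\ le M2 u2 (Sk M2 j2 w2))) /\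
  (forall k2, exists k1 v1 v2, Z v1 v2 /\
              le M1 v1 (Sk M1 k1 w1) /\ le M2 (Sk M2 k2 w2) v2 /\
              (forall j1, j1 < k1 -> exists j2 u1 u2, j2 < k2 /\ Z u1 u2 /\
                 le M2 (Sk M2 j2 w2) u2 /\ le M1 u1 (Sk M1 j1 w1))) /\
  (forall k2, exists k1 v1 v2, Z v1 v2 /\
              le M2 v2 (Sk M2 k2 w2) /\ le M1 (Sk M1 k1 w1) v1 /\
              (forall j1, j1 < k1 -> exists j2 u1 u2, j2 < k2 /\ Z u1 u2 /\
                 le M1 (Sk M1 j1 w1) u1 /\ le M2 u2 (Sk M2 j2 w2))) /\
  (forall k1, exists k2 v1 v2, Z v1 v2 /\
              le M1 v1 (Sk M1 k1 w1) /\ le M2 (Sk M2 k2 w2) v2 /\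
              (forall j2, j2 < k2 -> exists j1 u1 u2, j1 < k1 /\ Z u1 u2 /\
                 le M2 (Sk M2 j2 w2) u2 /\ le M1 u1 (Sk M1 j1 w1))).

Definition maximal {P : Type} (M : model P) (u : world M) : Prop :=
  forall v, le M u v -> v = u.

Definition unique_maximal_above {P : Type} (M : model P) (x : world M) : Prop :=
  exists u, (le M x u /\ maximal M u) /\
            (forall u', le M x u' /\ maximal M u' -> u' = u).

From Pilot Require Import Defs.
From mathcomp Require Import ssreflect ssrfun ssrbool eqtype ssrnat choice.
From Stdlib Require Import Classical ClassicalEpsilon FunctionalExtensionality
  PropExtensionality ProofIrrelevance.

(* Identify two maximal worlds whenever they carry the same valuation at every
   point of their future.  The projection onto the classes is a surjective
   bounded morphism commuting with the successor map, so the quotient is again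
   an ITL^{BD_n} model and the graph of the projection is a bisimulation.  By
   bounded depth every world sees a maximal world, and Box (~p \/ ~~p) at w
   makes any two maximal worlds above S^i(w) agree on every atom at every later
   time: ~p rules p out at both, while ~~p forces p at both because a maximal
   world is its only extension.  Hence they are identified in the quotient. *)

Set Implicit Arguments.
Unset Strict Implicit.

Lemma sat_Box {P : Type} (M : model P) (w : world M) (phi : form P) :
  sat M w (Box phi) <-> forall k, sat M (Sk M k w) phi.
Proof.
split=> H k; last by left; exact: H.
by case: (H k) => // -[i [_ []]].
Qed.

Section Frames.
Variables (P : Type) (M : model P).

Lemma le_Sk k u v :
  forward_confluent M -> le M u v -> le M (Sk M k u) (Sk M k v).
Proof. by move=> FC uv; elim: k => //= k IH; exact: FC. Qed.

Lemma maximal_succ u :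
  backward_confluent M -> maximal M u -> maximal M (succ M u).
Proof. by move=> BC maxu v /BC [t [/maxu -> <-]]. Qed.

Lemma maximal_Sk k u :
  backward_confluent M -> maximal M u -> maximal M (Sk M k u).
Proof. by move=> BC maxu; elim: k => //= k IH; exact: maximal_succ. Qed.

Lemma strict_chain_injective (f : nat -> world M) :
  is_partial_order M -> (forall i, le M (f i) (f i.+1) /\ f i.+1 <> f i) ->
  forall i j, i <> j -> f i <> f j.
Proof.
move=> [refl [trans anti]] step.
have mono i k : le M (f i) (f (k + i)).
  by elim: k => [|k IH]; [exact: refl | exact: trans IH (proj1 (step _))].
have lt_neq i j : i < j -> f i <> f j.
  move=> /subnK <- eq; apply: (proj2 (step i)); apply: anti.
  - by rewrite eq; exact: mono.
  - exact: (proj1 (step i)).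
move=> i j /eqP; rewrite neq_ltn => /orP [/lt_neq // | /lt_neq ji ij].
exact: ji (esym ij).
Qed.

Lemma exists_maximal_above n a :
  is_partial_order M -> bounded_depth M n -> exists2 m, le M a m & maximal M m.
Proof.
move=> PO BD; have [refl [trans _]] := PO.
apply: NNPP => nomax.
have climb v : le M a v -> exists u, le M v u /\ u <> v.
  move=> av; apply: NNPP => top; apply: nomax; exists v => // u vu.
  by apply: NNPP => ne; apply: top; exists u.
pose next v := epsilon (inhabits a) (fun u => le M v u /\ u <> v).
pose f i := iter i next a.
have above i : le M a (f i).
  elim: i => [|i IH]; first exact: refl.
  have le_next := proj1 (epsilon_spec (inhabits a) _ (climb _ IH)).
  exact: trans IH le_next.
have step i := epsilon_spec (inhabits a) _ (climb _ (above i)).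
apply: BD; exists f; split=> [i _ | i j _ _]; first exact: (proj1 (step i)).
exact: strict_chain_injective.
Qed.

Definition max_equiv (u v : world M) : Prop :=
  u = v \/ [/\ maximal M u, maximal M v &
               forall k p, Defs.val M (Sk M k u) p <-> Defs.val M (Sk M k v) p].

Lemma max_equiv_sym u v : max_equiv u v -> max_equiv v u.
Proof.
case=> [-> | [maxu maxv uv]]; [by left | right; split=> // k p].
exact: iff_sym.
Qed.

Lemma max_equiv_trans u v x : max_equiv u v -> max_equiv v x -> max_equiv u x.
Proof.
case=> [-> // | [maxu maxv uv]] [<- | [_ maxx vx]]; first by right.
by right; split=> // k p; exact: iff_trans (uv k p) (vx k p).
Qed.

Lemma max_equiv_maximal u v : max_equiv u v -> maximal M u -> maximal M v.
Proof. by case=> [-> | []]. Qed.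

Lemma max_equiv_val u v p : max_equiv u v -> Defs.val M u p -> Defs.val M v p.
Proof. by case=> [-> | [_ _ /(_ 0 p) []]]. Qed.

Lemma max_equiv_succ u v :
  backward_confluent M -> max_equiv u v -> max_equiv (succ M u) (succ M v).
Proof.
move=> BC [-> | [maxu maxv uv]]; [by left | right].
split; try exact: maximal_succ.
by move=> k p; have := uv k.+1 p; rewrite /Sk !iterSr.
Qed.

Lemma wem_maximal_val x m1 m2 p :
  sat M x (Or (Neg (Atom p)) (Neg (Neg (Atom p)))) ->
  le M x m1 -> le M x m2 -> maximal M m2 -> Defs.val M m1 p -> Defs.val M m2 p.
Proof.
case=> [notp | notnotp] xm1 xm2 max2 v1; first by case: (notp _ xm1 v1).
by apply: NNPP => nv2; apply: (notnotp _ xm2) => u /max2 ->.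
Qed.

Lemma box_wem_maximal_equiv w i m1 m2 :
  forward_confluent M -> backward_confluent M ->
  (forall p, sat M w (Box (Or (Neg (Atom p)) (Neg (Neg (Atom p)))))) ->
  le M (Sk M i w) m1 -> le M (Sk M i w) m2 -> maximal M m1 -> maximal M m2 ->
  max_equiv m1 m2.
Proof.
move=> FC BC wem im1 im2 max1 max2; right; split=> // k p.
have le_k m : le M (Sk M i w) m -> le M (Sk M (k + i) w) (Sk M k m).
  by move=> im; rewrite /Sk iterD; exact: le_Sk.
have wem_k := proj1 (sat_Box _ _) (wem p) (k + i).
by split; apply: wem_maximal_val wem_k _ _ _;
  try apply: le_k; try exact: maximal_Sk.
Qed.

End Frames.

Record bmorphism_onto {P : Type} (M M' : model P) (h : world M -> world M') :
    Prop := {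
  bmorph_surj : forall b, exists a, h a = b;
  bmorph_mono : forall u v, le M u v -> le M' (h u) (h v);
  bmorph_back : forall u b, le M' (h u) b -> exists2 v, le M u v & h v = b;
  bmorph_succ : forall v, h (succ M v) = succ M' (h v);
  bmorph_val : forall v p, Defs.val M v p <-> Defs.val M' (h v) p
}.
Arguments bmorphism_onto {P} M M' h.

Section BoundedMorphism.
Variables (P : Type) (M M' : model P) (h : world M -> world M').
Hypothesis hB : bmorphism_onto M M' h.

Lemma bmorph_Sk k v : h (Sk M k v) = Sk M' k (h v).
Proof. by elim: k => //= k IH; rewrite (bmorph_succ hB) IH. Qed.

Lemma bmorph_maximal v : maximal M v -> maximal M' (h v).
Proof. by move=> maxv b /(bmorph_back hB) [u /maxv -> <-]. Qed.

Lemma bmorph_refl : (forall v, le M v v) -> forall a, le M' a a.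
Proof.
by move=> refl a; have [u <-] := bmorph_surj hB a; exact: bmorph_mono.
Qed.

Lemma bmorph_trans :
  (forall u v x, le M u v -> le M v x -> le M u x) ->
  forall a b c, le M' a b -> le M' b c -> le M' a c.
Proof.
move=> trans a b c; have [u <-] := bmorph_surj hB a.
move=> /(bmorph_back hB) [v uv <-] /(bmorph_back hB) [x vx <-].
exact/(bmorph_mono hB)/(trans _ _ _ uv vx).
Qed.

Lemma bmorph_forward_confluent : forward_confluent M -> forward_confluent M'.
Proof.
move=> FC a b; have [u <-] := bmorph_surj hB a.
move=> /(bmorph_back hB) [v /FC uv <-].
by rewrite -!(bmorph_succ hB); exact: bmorph_mono.
Qed.

Lemma bmorph_backward_confluent : backward_confluent M -> backward_confluent M'.
Proof.
move=> BC a c; have [u <-] := bmorph_surj hB a.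
rewrite -(bmorph_succ hB) => /(bmorph_back hB) [_ /BC [t [ut <-]] <-].
by exists (h t); split; [exact: bmorph_mono | rewrite (bmorph_succ hB)].
Qed.

Lemma bmorph_monotone_val : monotone_val M -> monotone_val M'.
Proof.
move=> MV a b p; have [u <-] := bmorph_surj hB a.
move=> /(bmorph_back hB) [v uv <-] /(bmorph_val hB) up.
exact/(bmorph_val hB)/(MV _ _ _ uv up).
Qed.

Lemma bmorph_bounded_depth n : bounded_depth M n -> bounded_depth M' n.
Proof.
move=> BD [f [f_chain f_inj]]; apply: BD.
pose lift u b := epsilon (inhabits u) (fun v => le M u v /\ h v = b).
have lift_spec u b : le M' (h u) b -> le M u (lift u b) /\ h (lift u b) = b.
  move=> /(bmorph_back hB) [v uv hv].
  by apply: (epsilon_spec (inhabits u) (fun v => le M u v /\ h v = b)); exists v.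
have [a0 ha0] := bmorph_surj hB (f 0).
pose fix g i := if i is j.+1 then lift (g j) (f i) else a0.
have hg i : i <= n -> h (g i) = f i.
  elim: i => [// | i IH] lt_in.
  apply: (proj2 (lift_spec _ _ _)).
  by rewrite IH ?(ltnW lt_in) //; exact: f_chain.
exists g; split=> [i lt_in | i j i_n j_n ne_ij g_ij].
- apply: (proj1 (lift_spec _ _ _)).
  by rewrite hg ?(ltnW lt_in) //; exact: f_chain.
- by apply: (f_inj i j) => //; rewrite -hg // -[f j]hg // g_ij.
Qed.

Lemma bmorph_bisimulation :
  (forall v, le M v v) -> bisimulation M M' (fun v a => h v = a).
Proof.
move=> refl; have refl' := bmorph_refl refl.
move=> w1 _ <-; have diag k := bmorph_Sk k w1.
split; first exact: bmorph_val.
split; first by move=> v1 /(bmorph_mono hB) w1v1; exists (h v1).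
split; first by move=> v2 /(bmorph_back hB) [v1 w1v1 <-]; exists v1.
split; first exact: bmorph_succ.
(* For (C6)-(C9) the diagonal k2 = k1 works, as h commutes with S. *)
have refls k := (refl (Sk M k w1), refl' (Sk M' k (h w1))).
do 3?split; move=> k; exists k, (Sk M k w1), (Sk M' k (h w1)).
all: rewrite diag; have [? ?] := refls k; do !split=> //.
all: move=> j jk; exists j, (Sk M j w1), (Sk M' j (h w1)); rewrite diag.
all: by have [? ?] := refls j.
Qed.

Lemma bmorph_unique_maximal_above n x :
  is_partial_order M -> bounded_depth M n ->
  (forall m1 m2, le M x m1 -> le M x m2 -> maximal M m1 -> maximal M m2 ->
     h m1 = h m2) ->
  unique_maximal_above M' (h x).
Proof.
move=> PO BD same; have [_ [trans _]] := PO.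
have [m xm maxm] := exists_maximal_above x PO BD.
exists (h m); split.
  by split; [exact: bmorph_mono | exact: bmorph_maximal].
move=> _ [/(bmorph_back hB) [y xy <-] maxy].
have [m' ym' maxm'] := exists_maximal_above y PO BD.
rewrite -(maxy _ (bmorph_mono hB ym')).
exact: same _ _ (trans _ _ _ xy ym') xm maxm' maxm.
Qed.

End BoundedMorphism.

Section Quotient.
Variables (P : Type) (M : model P) (inh : inhabited (world M)).

Definition canon (v : world M) : world M :=
  epsilon inh (fun u => max_equiv u v).

Lemma canon_equiv v : max_equiv (canon v) v.
Proof.
by apply: (epsilon_spec inh (fun u => max_equiv u v)); exists v; left.
Qed.

Lemma canon_eq u v : max_equiv u v -> canon u = canon v.
Proof.
move=> uv; rewrite /canon; congr epsilon.
apply: functional_extensionality => x; apply: propositional_extensionality.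
by split=> xe; apply: max_equiv_trans xe _ => //; exact: max_equiv_sym.
Qed.

Lemma canon_idem v : canon (canon v) = canon v.
Proof. exact/canon_eq/canon_equiv. Qed.

Lemma canon_nonmax v : ~ maximal M v -> canon v = v.
Proof. by move=> nmax; case: (canon_equiv v) => // -[_ /nmax]. Qed.

Lemma maximal_canon v : maximal M v -> maximal M (canon v).
Proof. exact/max_equiv_maximal/max_equiv_sym/canon_equiv. Qed.

Definition qworld := {v : world M | canon v = v}.

Definition qproj (v : world M) : qworld := exist _ (canon v) (canon_idem v).

Definition qle (a b : qworld) : Prop :=
  exists2 y, le M (proj1_sig a) y & qproj y = b.

Definition qmodel : model P :=
  Model P qworld qle (fun a => qproj (succ M (proj1_sig a)))
    (fun a => Defs.val M (proj1_sig a)).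

Lemma qproj_eq u v : max_equiv u v -> qproj u = qproj v.
Proof.
by move=> /canon_eq uv; apply: eq_sig_hprop => // *; exact: proof_irrelevance.
Qed.

Lemma qproj_canon v : qproj (canon v) = qproj v.
Proof. exact/qproj_eq/canon_equiv. Qed.

Lemma qproj_val (a : qworld) : qproj (proj1_sig a) = a.
Proof.
by apply: eq_sig_hprop => [* | ]; [exact: proof_irrelevance | exact: proj2_sig a].
Qed.

Hypothesis refl : forall v, le M v v.
Hypothesis anti : forall u v, le M u v -> le M v u -> u = v.
Hypothesis BC : backward_confluent M.

Lemma qproj_mono u v : le M u v -> qle (qproj u) (qproj v).
Proof.
move=> uv; case: (classic (maximal M u)) => [maxu | /canon_nonmax cu].
- by rewrite (maxu v uv); exists (canon u); [exact: refl | exact: qproj_canon].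
- by exists v; rewrite //= cu.
Qed.

Lemma qproj_back u b : qle (qproj u) b -> exists2 v, le M u v & qproj v = b.
Proof.
case=> y /= uy <-; case: (classic (maximal M u)) => [maxu | /canon_nonmax cu].
- by exists u; rewrite // (maximal_canon maxu uy) qproj_canon.
- by rewrite cu in uy; exists y.
Qed.

Lemma qproj_bmorphism : bmorphism_onto M qmodel qproj.
Proof.
split.
- by move=> a; exists (proj1_sig a); exact: qproj_val.
- exact: qproj_mono.
- exact: qproj_back.
- by move=> v; apply/qproj_eq/max_equiv_succ/max_equiv_sym/canon_equiv.
- move=> v p /=; split; apply: max_equiv_val; last exact: canon_equiv.
  exact/max_equiv_sym/canon_equiv.
Qed.

Lemma qle_anti a b : qle a b -> qle b a -> a = b.
Proof.
have fixed c d : qle c d -> maximal M (proj1_sig c) -> d = c.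
  by case=> y cy <- /(_ y cy) ->; exact: qproj_val.
have below c d :
    qle c d -> ~ maximal M (proj1_sig d) -> le M (proj1_sig c) (proj1_sig d).
  by case=> y cy <- /= nmax; rewrite canon_nonmax // => /maximal_canon.
move=> ab ba.
case: (classic (maximal M (proj1_sig a))) => [/(fixed _ _ ab) -> // | na].
case: (classic (maximal M (proj1_sig b))) => [/(fixed _ _ ba) -> // | nb].
rewrite -(qproj_val a) -(qproj_val b).
by rewrite (anti (below _ _ ab nb) (below _ _ ba na)).
Qed.

End Quotient.

Theorem lemma4p13 (P : countType) (n : nat) (M : model P) (w : world M) :
  ITL_BD_model n M ->
  (forall p : P, sat M w (Box (Or (Neg (Atom p)) (Neg (Neg (Atom p)))))) ->
  exists (M' : model P) (w' : world M') (Z : world M -> world M' -> Prop),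
    ITL_BD_model n M' /\ bisimulation M M' Z /\
    forall i : nat, Z (Sk M i w) (Sk M' i w') /\
                    unique_maximal_above M' (Sk M' i w').
Proof.
move=> [inh [PO [FC [BC [MV BD]]]]] wem; have [refl [trans anti]] := PO.
have hB := qproj_bmorphism inh refl BC.
exists (qmodel inh), (qproj inh w), (fun v a => qproj inh v = a).
split; [|split].
- split; first by constructor; exact: qproj inh w.
  split.
    split; first exact: bmorph_refl hB refl.
    by split; [exact: bmorph_trans hB trans | exact: qle_anti anti].
  split; first exact: bmorph_forward_confluent hB FC.
  split; first exact: bmorph_backward_confluent hB BC.
  split; first exact: bmorph_monotone_val hB MV.
  exact: (bmorph_bounded_depth hB BD).
- exact: bmorph_bisimulation.
- move=> i; rewrite -(bmorph_Sk hB); split=> //.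
  apply: (bmorph_unique_maximal_above hB PO BD) => m1 m2 im1 im2 max1 max2.
  exact/qproj_eq/(box_wem_maximal_equiv FC BC wem im1 im2 max1 max2).
Qed.
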